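(* Let $H$ be a graph and let $P_1, P_2$ be two internally vertex-disjoint paths in $H$ of the same length parity, both with endpoints $u$ and $v$, such that every internal vertex of $P_1$ and of $P_2$ has degree exactly $2$ in $H$. If $S$ is a minimum-size odd cycle transversal of $H$, then $S \cap (V(P_1) \cup V(P_2)) \subseteq \{u,v\}$.
   Context: An odd cycle transversal of $H$ is a set $S \subseteq V(H)$ such that $H - S$ is bipartite. *)

From mathcomp Require Import all_boot.
Set Implicit Arguments. Unset Strict Implicit. Unset Printing Implicit Defensive.

(* A (finite, simple) graph H: vertex type T : finType, adjacency e : rel T,
   assumed symmetric and irreflexive in the theorem. *)

Definition deg (T : finType) (e : rel T) (x : T) : nat := #|[set y | e x y]|.

(* A path in H with endpoints u and v, given as the vertex sequence u :: p:
   consecutive vertices adjacent, all vertices distinct, last vertex v. *)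
Definition is_path (T : finType) (e : rel T) (u v : T) (p : seq T) : bool :=
  [&& path e u p, uniq (u :: p) & last u p == v].

Definition pverts (T : finType) (u : T) (p : seq T) : {set T} := [set x in u :: p].

(* internal vertices: all vertices of u :: p except the first and the last
   (positionally) *)
Definition pinternal (T : finType) (u : T) (p : seq T) : {set T} :=
  [set x in drop 1 (belast u p)].

Definition plength (T : finType) (u : T) (p : seq T) : nat := size p.

Definition bipartite_minus (T : finType) (e : rel T) (S : {set T}) : Prop :=
  exists c : T -> bool, forall x y, x \notin S -> y \notin S -> e x y -> c x != c y.

Definition oct (T : finType) (e : rel T) (S : {set T}) : Prop := bipartite_minus e S.

Definition min_oct (T : finType) (e : rel T) (S : {set T}) : Prop :=
  oct e S /\ forall S' : {set T}, oct e S' -> #|S| <= #|S'|.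

From mathcomp Require Import all_boot zify.
Set Implicit Arguments. Unset Strict Implicit. Unset Printing Implicit Defensive.

(* Let c properly 2-colour H - S, and suppose S meets the interior of P2.
   Every internal vertex of P1 and P2 has both of its neighbours on its own
   path, so the interiors can be recoloured alternately along the paths; this
   is consistent as soon as u or v is deleted, or u and v receive colours that
   differ by the common parity of |P1| and |P2|.  If u or v lies in S, or P1
   avoids S (then c already has that parity along P1), S minus the interiors
   is a smaller odd cycle transversal.  Otherwise S meets both interiors, and
   S minus the interiors plus u is still smaller. *)

Section PathVertices.
Variables (T : finType) (u : T) (p : seq T).

Lemma mem_path_vertices x :
  x \in u :: p -> [\/ x \in pinternal u p, x = u | x = last u p].
Proof.
case: p => [|y q]; first by rewrite inE => /eqP; apply: Or32.
rewrite lastI mem_rcons inE /= => /predU1P[-> | /predU1P[-> | xq]].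
- exact: Or33.
- exact: Or32.
- by apply: Or31; rewrite /pinternal inE /= drop0.
Qed.

Hypothesis p_uniq : uniq (u :: p).

Lemma mem_pinternal x :
  (x \in pinternal u p) = (x \in u :: p) && (0 < index x (u :: p) < size p).
Proof.
rewrite /pinternal inE; case: p p_uniq => [|y q]; first by rewrite /= !andbF.
rewrite [drop 1 _]/= drop0 => /andP[uyq _].
have -> : belast y q = take (size q) (y :: q).
  by rewrite lastI -cats1 take_size_cat ?size_belast.
have -> : index x (u :: y :: q) = if u == x then 0 else (index x (y :: q)).+1 by [].
rewrite inE; have [<- | ux] := eqVneq u x.
  by rewrite orTb ltnn /=; apply: contraNF uyq; apply: mem_take.
rewrite orFb ltnS in_take_leq ?leqnSn //.
have [// | xyq] := boolP (x \in y :: q).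
by rewrite memNindex //= ltnNge leqnSn.
Qed.

Lemma head_notin_pinternal : u \notin pinternal u p.
Proof. by rewrite mem_pinternal /= eqxx ltnn /= andbF. Qed.

Lemma index_last : index (last u p) (u :: p) = size p.
Proof. by rewrite -[last u p]/(last u (u :: p)) -nth_last index_uniq. Qed.

Lemma last_notin_pinternal : last u p \notin pinternal u p.
Proof. by rewrite mem_pinternal index_last ltnn !andbF. Qed.

End PathVertices.

(* [oct e X] unfolds to [exists c, proper_off e X c]. *)
Definition proper_off (T : finType) (e : rel T) (X : {set T}) (c : T -> bool) :=
  forall x y, x \notin X -> y \notin X -> e x y -> c x != c y.

Section Colourings.
Variables (T : finType) (e : rel T).

Lemma proper_offS (X Y : {set T}) c : X \subset Y -> proper_off e X c -> proper_off e Y c.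
Proof.
move=> sXY hc x y /(contra (subsetP sXY x)) xX /(contra (subsetP sXY y)) yX.
exact: hc.
Qed.

Lemma proper_off_path_parity (X : {set T}) c u p :
  proper_off e X c -> path e u p -> (forall x, x \in u :: p -> x \notin X) ->
  c (last u p) = c u (+) odd (size p).
Proof.
move=> hc; elim: p u => [|y p IH] u /=; first by rewrite addbF.
case/andP=> euy yp notX; rewrite IH //; last by move=> x xp; apply: notX; rewrite inE xp orbT.
have yX : y \notin X by apply: notX; rewrite !inE eqxx orbT.
have := hc u y (notX u (mem_head _ _)) yX euy.
by case: (c u) (c y) (odd (size p)) => [] [] [].
Qed.

End Colourings.

Section DegreeTwoPath.
Variables (T : finType) (e : rel T) (u v : T) (p : seq T).
Hypotheses (e_sym : symmetric e) (hp : is_path e u v p)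
  (hdeg : forall x, x \in pinternal u p -> deg e x = 2).

Lemma pinternal_nbr x y : x \in pinternal u p -> e x y ->
  (y \in u :: p) && (odd (index y (u :: p)) == ~~ odd (index x (u :: p))).
Proof.
have /and3P[p_path p_uniq _] := hp.
move=> xI exy; move: (xI); rewrite mem_pinternal // => /andP[xp /andP[i_gt0 i_lt]].
set i := index x (u :: p) in i_gt0 i_lt *.
have xi : nth u (u :: p) i = x by rewrite nth_index.
have edge j : j < size p -> e (nth u (u :: p) j) (nth u (u :: p) j.+1).
  exact: (pathP u p_path).
set a := nth u (u :: p) i.-1; set b := nth u (u :: p) i.+1.
have idx_a : index a (u :: p) = i.-1 by rewrite index_uniq //=; lia.
have idx_b : index b (u :: p) = i.+1 by rewrite index_uniq.
have nbrs : [set y | e x y] = [set a; b].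
  apply/esym/eqP; rewrite eqEcard cards2 -/(deg e x) hdeg //.
  have -> : a != b by apply/eqP => ab; move: idx_b; rewrite -ab idx_a; lia.
  rewrite andbT; apply/subsetP => z /set2P[] ->; rewrite inE -?xi ?edge //.
  by rewrite e_sym; have := edge i.-1; rewrite prednK //; apply; lia.
have : y \in [set a; b] by rewrite -nbrs inE.
case/set2P=> ->; rewrite mem_nth ?idx_a ?idx_b //=; last lia.
by rewrite -{2}(prednK i_gt0) /= negbK.
Qed.

Lemma proper_off_extend (X : {set T}) c :
  [disjoint pinternal u p & X] ->
  proper_off e (X :|: pinternal u p) c ->
  (u \notin X -> v \notin X -> c v = c u (+) odd (size p)) ->
  exists2 c', proper_off e X c' & {in [predC pinternal u p], c' =1 c}.
Proof.
have /and3P[_ p_uniq /eqP p_last] := hp.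
move=> dIX hc huv.
pose b := if u \in X then c v (+) odd (size p) else c u.
pose c' z := if z \in pinternal u p then b (+) odd (index z (u :: p)) else c z.
have c'_path w : w \in u :: p -> w \notin X -> c' w = b (+) odd (index w (u :: p)).
  move=> wp; rewrite /c'; case: (mem_path_vertices wp) => [-> // | -> | ->] wX.
    by rewrite (negbTE (head_notin_pinternal p_uniq)) /= eqxx addbF /b (negbTE wX).
  rewrite (negbTE (last_notin_pinternal p_uniq)) index_last // p_last /b.
  case: ifP => uX; first by rewrite -addbA addbb addbF.
  by apply: huv; rewrite ?uX // -p_last.
have c'_int x y : x \in pinternal u p -> y \notin X -> e x y -> c' x != c' y.
  move=> xI yX /(pinternal_nbr xI) /andP[yp /eqP odd_y].
  have xp : x \in u :: p by move: xI; rewrite mem_pinternal // => /andP[].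
  rewrite (c'_path x) ?(c'_path y) ?odd_y ?(disjointFr dIX xI) //.
  by case: (b) (odd _) => [] [].
exists c' => [x y xX yX exy | z]; last by rewrite inE /c' => /negbTE ->.
have [xI | xI] := boolP (x \in pinternal u p); first exact: c'_int.
have [yI | yI] := boolP (y \in pinternal u p).
  by rewrite eq_sym; apply: c'_int; rewrite // e_sym.
by rewrite /c' (negbTE xI) (negbTE yI); apply: hc; rewrite // in_setU negb_or ?xX ?yX.
Qed.

End DegreeTwoPath.

Section TwoParallelPaths.
Variables (T : finType) (e : rel T) (u v : T) (p1 p2 : seq T).
Hypotheses (e_sym : symmetric e)
  (hp1 : is_path e u v p1) (hp2 : is_path e u v p2)
  (hdisj : [disjoint pinternal u p1 & pinternal u p2])
  (hpar : odd (size p1) = odd (size p2))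
  (hdeg1 : forall x, x \in pinternal u p1 -> deg e x = 2)
  (hdeg2 : forall x, x \in pinternal u p2 -> deg e x = 2).

Local Notation inner := (pinternal u p1 :|: pinternal u p2).

Let ends_notin_inner : (u \notin inner) && (v \notin inner).
Proof.
have /and3P[_ uniq1 /eqP last1] := hp1; have /and3P[_ uniq2 /eqP last2] := hp2.
rewrite !in_setU !negb_or !head_notin_pinternal //= -{1}last1 -last2.
by rewrite !last_notin_pinternal.
Qed.

Lemma oct_recolour_inner (X : {set T}) c :
  [disjoint X & inner] -> proper_off e (X :|: inner) c ->
  (u \notin X -> v \notin X -> c v = c u (+) odd (size p1)) -> oct e X.
Proof.
move=> dX hc huv; move: dX; rewrite -setI_eq0 setIUr setU_eq0 !setI_eq0.
case/andP=> dX1 dX2; case/andP: ends_notin_inner; rewrite !in_setU !negb_or.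
case/andP=> uI1 uI2 /andP[vI1 vI2].
have [c1 hc1 c1E] : exists2 c1, proper_off e (X :|: pinternal u p2) c1
    & {in [predC pinternal u p1], c1 =1 c}.
  apply: (proper_off_extend e_sym hp1 hdeg1).
  - by rewrite -setI_eq0 setIUr setU_eq0 !setI_eq0 disjoint_sym dX1 hdisj.
  - by rewrite -setUA (setUC (pinternal u p2)).
  - by rewrite !in_setU !negb_or => /andP[uX _] /andP[vX _]; apply: huv.
have dX2' : [disjoint pinternal u p2 & X] by rewrite disjoint_sym.
have huv1 : u \notin X -> v \notin X -> c1 v = c1 u (+) odd (size p2).
  by move=> uX vX; rewrite -hpar (c1E u uI1) (c1E v vI1); apply: huv.
by have [c2 hc2 _] := proper_off_extend e_sym hp2 hdeg2 dX2' hc1 huv1; exists c2.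
Qed.

Lemma oct_setD_inner (S : {set T}) c :
  proper_off e S c -> (u \notin S -> v \notin S -> c v = c u (+) odd (size p1)) ->
  oct e (S :\: inner).
Proof.
move=> hc huv; have /andP[uI vI] := ends_notin_inner.
apply: (oct_recolour_inner (c := c)).
- by rewrite disjoint_subset; apply/subsetP => x; rewrite !inE => /andP[].
- apply: proper_offS hc; apply/subsetP => x xS.
  by rewrite in_setU in_setD xS andbT orNb.
- by rewrite !in_setD uI vI; apply: huv.
Qed.

Lemma min_oct_notin_pinternal (S : {set T}) z :
  min_oct e S -> z \in pinternal u p2 -> z \notin S.
Proof.
case=> [[c hc] hmin] zI2; apply/negP => zS.
have /and3P[p1_path _ /eqP p1_last] := hp1.
have no_smaller X : oct e X -> #|X| < #|S| -> False.
  by move=> /hmin; rewrite leqNgt => /negP.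
have S_split : #|S :&: inner| + #|S :\: inner| = #|S| := cardsID _ _.
have zSI : z \in S :&: inner by rewrite in_setI in_setU zS zI2 orbT.
have S0_lt : #|S :\: inner| < #|S|.
  by rewrite -S_split -add1n leq_add2r card_gt0; apply/set0Pn; exists z.
have [uvS | /norP[uS vS]] := boolP ((u \in S) || (v \in S)).
  apply: (no_smaller _ (oct_setD_inner hc _) S0_lt).
  by move=> /negbTE uS /negbTE vS; rewrite uS vS in uvS.
have [/set0Pn[y yS1] | ] := boolP (S :&: pinternal u p1 != set0); last first.
  rewrite negbK setI_eq0 => dS1.
  apply: (no_smaller _ (oct_setD_inner hc _) S0_lt) => _ _.
  rewrite -p1_last; apply: proper_off_path_parity hc p1_path _.
  move=> x /mem_path_vertices[xI1 | -> | ->] //; first by rewrite (disjointFl dS1 xI1).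
  by rewrite p1_last.
have yz : y != z.
  by apply/eqP => yz; move: yS1; rewrite in_setI yz (disjointFl hdisj zI2) andbF.
have two_in_inner : 2 <= #|S :&: inner|.
  have <- : #|[set y; z]| = 2 by rewrite cards2 yz.
  apply/subset_leq_card/subsetP => x /set2P[] -> //.
  by case/setIP: yS1 => yS yI1; rewrite in_setI in_setU yS yI1.
have huS : proper_off e (u |: S) c by apply: proper_offS hc; apply: subsetUr.
apply: (no_smaller _ (oct_setD_inner huS _)); first by rewrite setU11.
have sub_u : (u |: S) :\: inner \subset u |: (S :\: inner).
  apply/subsetP => x; rewrite in_setD !in_setU1 in_setD.
  by case/andP=> xI /predU1P[-> | xS]; rewrite ?eqxx // xI xS orbT.
apply: leq_ltn_trans (subset_leq_card sub_u) _.
rewrite cardsU1 -S_split ltn_add2r.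
exact: leq_ltn_trans (leq_b1 _) two_in_inner.
Qed.

End TwoParallelPaths.

Lemma mem_path_ends (T : finType) (e : rel T) u v p x :
  is_path e u v p -> x \in u :: p -> x \notin pinternal u p -> x \in [set u; v].
Proof.
case/and3P=> _ _ /eqP <- /mem_path_vertices[-> // | -> | ->] _; rewrite !inE eqxx ?orbT //.
Qed.

Theorem mainTheorem14 (T : finType) (e : rel T)
  (e_sym : symmetric e) (e_irr : irreflexive e)
  (u v : T) (p1 p2 : seq T)
  (hp1 : is_path e u v p1) (hp2 : is_path e u v p2)
  (hdisj : [disjoint pinternal u p1 & pinternal u p2])
  (hpar : odd (plength u p1) = odd (plength u p2))
  (hdeg1 : forall x, x \in pinternal u p1 -> deg e x = 2)
  (hdeg2 : forall x, x \in pinternal u p2 -> deg e x = 2)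
  (S : {set T}) (hS : min_oct e S) :
  S :&: (pverts u p1 :|: pverts u p2) \subset [set u; v].
Proof.
have hdisj' : [disjoint pinternal u p2 & pinternal u p1] by rewrite disjoint_sym.
have S_I1 := min_oct_notin_pinternal e_sym hp2 hp1 hdisj' (esym hpar) hdeg2 hdeg1 hS.
have S_I2 := min_oct_notin_pinternal e_sym hp1 hp2 hdisj hpar hdeg1 hdeg2 hS.
apply/subsetP => z /setIP[zS /setUP[] zp]; rewrite in_set in zp.
- exact: mem_path_ends hp1 zp (contraL (S_I1 z) zS).
- exact: mem_path_ends hp2 zp (contraL (S_I2 z) zS).
Qed.
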